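(* Let $G$ be a group, $g\in[G,G]$, let $m\ge 1$, let $g_1,\dots,g_m$ be conjugates of $g$ in $G$, and let $n_1,\dots,n_m$ be integers. Unless $m=1$ and $g_1^{n_1}=1$, we have $$\mathrm{cl}_G(g_1^{n_1}g_2^{n_2}\cdots g_m^{n_m})\ \ge\ \mathrm{scl}_G(g)\left|\sum_{i=1}^m n_i\right|-\frac{m}{2}+1.$$
   Context: For a group $G$, $[G,G]$ is its commutator subgroup. For $h\in[G,G]$, the commutator length $\mathrm{cl}_G(h)$ is the least $n\ge 0$ such that $h=[a_1,b_1]\cdots[a_n,b_n]$ for some $a_i,b_i\in G$. The stable commutator length is $\mathrm{scl}_G(g)=\lim_{n\to\infty}\mathrm{cl}_G(g^n)/n$ for $g\in[G,G]$. Note that a product of conjugates of $g\in[G,G]$ lies in $[G,G]$. *)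

From Stdlib Require Import Reals ZArith List Arith.
Open Scope R_scope.

Record Group := {
  carrier :> Type;
  gmul : carrier -> carrier -> carrier;
  gone : carrier;
  ginv : carrier -> carrier;
  gmul_assoc : forall a b c, gmul a (gmul b c) = gmul (gmul a b) c;
  gmul_1l : forall a, gmul gone a = a;
  gmul_Vl : forall a, gmul (ginv a) a = gone
}.

Arguments gmul {g} _ _.
Arguments gone {g}.
Arguments ginv {g} _.

Section GroupDefs.
Variable G : Group.

Definition gcomm (a b : G) : G := gmul (gmul (ginv a) (ginv b)) (gmul a b).

Definition gconj (g x : G) : G := gmul (ginv x) (gmul g x).

Fixpoint npow (x : G) (n : nat) : G :=
  match n with O => gone | S k => gmul x (npow x k) end.

Definition zpow (x : G) (z : Z) : G :=
  match z with
  | Z0 => gone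
  | Zpos p => npow x (Pos.to_nat p)
  | Zneg p => ginv (npow x (Pos.to_nat p))
  end.

Definition prod_comms (l : list (G * G)) : G :=
  fold_right (fun p acc => gmul (gcomm (fst p) (snd p)) acc) gone l.

Definition is_prod_comm (h : G) (n : nat) : Prop :=
  exists l : list (G * G), length l = n /\ prod_comms l = h.

Definition in_commutator_subgroup (h : G) : Prop := exists n, is_prod_comm h n.

Definition cl_is (h : G) (k : nat) : Prop :=
  is_prod_comm h k /\ forall j, is_prod_comm h j -> (k <= j)%nat.

Definition scl_is (g : G) (s : R) : Prop :=
  exists c : nat -> nat,
    (forall n, cl_is (npow g (S n)) (c n)) /\
    Un_cv (fun n => INR (c n) / INR (S n)) s.

Definition gprod (f : nat -> G) (m : nat) : G :=
  fold_right (fun i acc => gmul (f i) acc) gone (seq 0 m).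

End GroupDefs.

Arguments gcomm {G} _ _.
Arguments gconj {G} _ _.
Arguments npow {G} _ _.
Arguments zpow {G} _ _.
Arguments is_prod_comm {G} _ _.
Arguments in_commutator_subgroup {G} _.
Arguments cl_is {G} _ _.
Arguments scl_is {G} _ _.
Arguments gprod {G} _ _.

Definition zsum (n : nat -> Z) (m : nat) : Z :=
  fold_right Z.add 0%Z (map n (seq 0 m)).

From Stdlib Require Import Reals ZArith List Lia Lra Psatz.

(* Write h = g_1^{n_1}...g_m^{n_m} as a product of k commutators and raise the
   factors to the power 2q.  The classical estimate
   cl(a^{2q} b^{2q} (ab)^{-2q}) <= q gives
   cl(g_1^{2q n_1}...g_m^{2q n_m}) <= (2k+m-2)q + k.  Gathering these conjugates
   of powers of g into g^{2qN}, N = n_1 + ... + n_m, costs m more commutators,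
   so cl(g^{2qN}) <= (2k+m-2)q + k + m; dividing by 2q|N| and letting q go to
   infinity gives scl(g)|N| <= k + m/2 - 1. *)

Local Notation "x ⋆ y" := (gmul x y) (at level 40, left associativity).

Section GroupTheory.
Variable G : Group.
Implicit Types (a b x y : G) (l : list G).

Lemma mulg_idem_eq1 x : x ⋆ x = x -> x = gone.
Proof.
intro Hx; transitivity (ginv x ⋆ x ⋆ x).
- now rewrite gmul_Vl, gmul_1l.
- now rewrite <- gmul_assoc, Hx, gmul_Vl.
Qed.

Lemma mulgV x : x ⋆ ginv x = gone.
Proof.
apply mulg_idem_eq1.
now rewrite <- gmul_assoc, (gmul_assoc G (ginv x)), gmul_Vl, gmul_1l.
Qed.

Lemma mulg1 x : x ⋆ gone = x.
Proof. now rewrite <- (gmul_Vl G x), gmul_assoc, mulgV, gmul_1l. Qed.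

Lemma invg_uniq a b : a ⋆ b = gone -> b = ginv a.
Proof.
intro Hab.
now rewrite <- (gmul_1l G b), <- (gmul_Vl G a), <- gmul_assoc, Hab, mulg1.
Qed.

Lemma invgK a : ginv (ginv a) = a.
Proof. symmetry; apply invg_uniq, gmul_Vl. Qed.

Lemma invgM a b : ginv (a ⋆ b) = ginv b ⋆ ginv a.
Proof.
symmetry; apply invg_uniq.
now rewrite <- gmul_assoc, (gmul_assoc G b), mulgV, gmul_1l, mulgV.
Qed.

Lemma invg1 : ginv (@gone G) = gone.
Proof. symmetry; apply invg_uniq, gmul_1l. Qed.

Lemma mulKg a x : ginv a ⋆ (a ⋆ x) = x.
Proof. now rewrite gmul_assoc, gmul_Vl, gmul_1l. Qed.

Lemma mulKVg a x : a ⋆ (ginv a ⋆ x) = x.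
Proof. now rewrite gmul_assoc, mulgV, gmul_1l. Qed.

Ltac gsimpl :=
  unfold gcomm, gconj in *;
  repeat progress rewrite ?invgM, ?invgK, ?invg1, ?gmul_1l, ?mulg1, ?mulKg,
    ?mulKVg, ?gmul_Vl, ?mulgV, <- ?gmul_assoc.

(** * Powers *)

Lemma npow1 n : npow (@gone G) n = gone.
Proof. induction n as [|n IH]; simpl; [|rewrite IH, gmul_1l]; reflexivity. Qed.

Lemma npow_mulC x n : npow x n ⋆ x = x ⋆ npow x n.
Proof.
induction n as [|n IH]; simpl.
- now rewrite gmul_1l, mulg1.
- now rewrite <- gmul_assoc, IH.
Qed.

Lemma npowD x i j : npow x (i + j) = npow x i ⋆ npow x j.
Proof.
induction i as [|i IH]; simpl.
- now rewrite gmul_1l.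
- now rewrite IH, gmul_assoc.
Qed.

Lemma npowSr x n : npow x (S n) = npow x n ⋆ x.
Proof. simpl; now rewrite npow_mulC. Qed.

Lemma npowV x n : npow (ginv x) n = ginv (npow x n).
Proof.
induction n as [|n IH]; simpl.
- now rewrite invg1.
- now rewrite IH, <- invgM, npow_mulC.
Qed.

Lemma npow_conj x y n : npow (gconj x y) n = gconj (npow x n) y.
Proof. induction n as [|n IH]; simpl; [|rewrite IH]; gsimpl; reflexivity. Qed.

Lemma zpowS x z : zpow x (Z.succ z) = x ⋆ zpow x z.
Proof.
destruct z as [|p|p]; simpl.
- now rewrite mulg1.
- now replace (Pos.to_nat (p + 1)) with (S (Pos.to_nat p)) by lia.
- destruct (Pos.eq_dec p 1) as [->|Hp].
  + simpl; now rewrite mulg1, mulgV.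
  + replace (Z.pos_sub 1 p) with (Z.neg (Pos.pred p))
      by (rewrite Z.pos_sub_lt by lia; f_equal; lia).
    simpl; replace (Pos.to_nat p) with (S (Pos.to_nat (Pos.pred p))) by lia.
    simpl; now rewrite <- npow_mulC, invgM, mulKVg.
Qed.

Lemma zpowP x z : zpow x (Z.pred z) = ginv x ⋆ zpow x z.
Proof. rewrite <- (Z.succ_pred z) at 2; now rewrite zpowS, mulKg. Qed.

Lemma zpow_mulC x z : zpow x z ⋆ x = x ⋆ zpow x z.
Proof.
induction z as [|z IH|z IH] using Z.peano_ind.
- simpl; now rewrite gmul_1l, mulg1.
- now rewrite zpowS, <- gmul_assoc, IH.
- now rewrite zpowP, <- gmul_assoc, IH, mulKVg, mulKg.
Qed.

Lemma zpowD x i j : zpow x (i + j) = zpow x i ⋆ zpow x j.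
Proof.
assert (HV : ginv x ⋆ zpow x i = zpow x i ⋆ ginv x).
{ transitivity (ginv x ⋆ (zpow x i ⋆ x) ⋆ ginv x).
  - now rewrite <- !gmul_assoc, mulgV, mulg1.
  - now rewrite zpow_mulC, mulKg. }
induction j as [|j IH|j IH] using Z.peano_ind.
- rewrite Z.add_0_r; simpl; now rewrite mulg1.
- now rewrite Z.add_succ_r, !zpowS, IH, !gmul_assoc, zpow_mulC.
- now rewrite Z.add_pred_r, !zpowP, IH, !gmul_assoc, HV.
Qed.

Lemma zpow_conj x y z : zpow (gconj x y) z = gconj (zpow x z) y.
Proof.
induction z as [|z IH|z IH] using Z.peano_ind.
- simpl; gsimpl; reflexivity.
- rewrite !zpowS, IH; gsimpl; reflexivity.
- rewrite !zpowP, IH; gsimpl; reflexivity.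
Qed.

Lemma npow_zpow x z p : npow (zpow x z) p = zpow x (Z.of_nat p * z).
Proof.
induction p as [|p IH]; [reflexivity|].
now rewrite Nat2Z.inj_succ, Z.mul_succ_l, zpowD, <- IH, npowSr.
Qed.

(** * Bounds on the commutator length *)

Definition cl_le x k := exists j, (j <= k)%nat /\ is_prod_comm x j.

Lemma prod_commsD (l1 l2 : list (G * G)) :
  prod_comms G (l1 ++ l2) = prod_comms G l1 ⋆ prod_comms G l2.
Proof.
induction l1 as [|p l1 IH]; simpl.
- now rewrite gmul_1l.
- now rewrite IH, gmul_assoc.
Qed.

Lemma cl_le1 k : cl_le gone k.
Proof. exists 0%nat; split; [lia|]. now exists nil. Qed.

Lemma cl_le_comm a b : cl_le (gcomm a b) 1.
Proof. exists 1%nat; split; [lia|]. exists ((a, b) :: nil); simpl; now rewrite mulg1. Qed.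

Lemma cl_le_mono x i j : (i <= j)%nat -> cl_le x i -> cl_le x j.
Proof. intros Hij [t [Ht Hx]]; exists t; split; [lia|exact Hx]. Qed.

Lemma cl_leM x y i j : cl_le x i -> cl_le y j -> cl_le (x ⋆ y) (i + j).
Proof.
intros [t [Ht [l [Hl <-]]]] [u [Hu [l' [Hl' <-]]]].
exists (t + u)%nat; split; [lia|].
exists (l ++ l'); split.
- rewrite length_app; lia.
- apply prod_commsD.
Qed.

Lemma cl_le_conj x y k : cl_le x k -> cl_le (gconj x y) k.
Proof.
intros [t [Ht [l [Hl <-]]]]; exists t; split; [exact Ht|].
exists (map (fun p => (gconj (fst p) y, gconj (snd p) y)) l); split.
- now rewrite length_map.
- clear; induction l as [|p l IH]; simpl; [|rewrite IH]; gsimpl; reflexivity.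
Qed.

Lemma cl_leV x k : cl_le x k -> cl_le (ginv x) k.
Proof.
intros [t [Ht [l [Hl <-]]]]; subst t; revert k Ht.
induction l as [|[a b] l IH]; intros k Hk; simpl.
- rewrite invg1; apply cl_le1.
- simpl in Hk; rewrite invgM.
  replace k with ((k - 1) + 1)%nat by lia.
  apply cl_leM; [apply IH; lia|].
  replace (ginv (gcomm a b)) with (gcomm b a) by (gsimpl; reflexivity).
  apply cl_le_comm.
Qed.

Lemma cl_le_is x c k : cl_is x c -> cl_le x k -> (c <= k)%nat.
Proof. intros [_ Hmin] [j [Hj Hx]]; specialize (Hmin j Hx); lia. Qed.

Lemma cl_le_npow_abs x z k : cl_le (zpow x z) k -> cl_le (npow x (Z.abs_nat z)) k.
Proof. destruct z; simpl; auto. intro Hx; apply cl_leV in Hx; now rewrite invgK in Hx. Qed.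

(** * Powers of products *)

Definition pow_defect a b n := npow a n ⋆ npow b n ⋆ ginv (npow (a ⋆ b) n).

Lemma pow_defect_add2 a b n :
  pow_defect a b (n + 2) =
  gconj (gcomm (ginv (a ⋆ (a ⋆ b))) (ginv (npow b n ⋆ ginv a))) (ginv (npow a n))
  ⋆ pow_defect a b n.
Proof.
unfold pow_defect; rewrite (npowD a n 2), (npowD (a ⋆ b) n 2).
replace (n + 2)%nat with (S (S n)) by lia; rewrite (npowSr b (S n)).
cbn [npow]; gsimpl; reflexivity.
Qed.

Lemma cl_le_pow_defect_double a b q : cl_le (pow_defect a b (2 * q)) q.
Proof.
induction q as [|q IH].
- unfold pow_defect; simpl; rewrite gmul_1l, invg1, gmul_1l; apply cl_le1.
- replace (2 * S q)%nat with (2 * q + 2)%nat by lia.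
  rewrite pow_defect_add2; replace (S q) with (1 + q)%nat by lia.
  apply cl_leM; [apply cl_le_conj, cl_le_comm | exact IH].
Qed.

Lemma npow_double_mul a b q : exists P,
  npow a (2 * q) ⋆ npow b (2 * q) = P ⋆ npow (a ⋆ b) (2 * q) /\ cl_le P q.
Proof.
exists (pow_defect a b (2 * q)); split.
- unfold pow_defect; gsimpl; reflexivity.
- apply cl_le_pow_defect_double.
Qed.

Definition lprod l := fold_right (@gmul G) gone l.

Lemma lprod_app l1 l2 : lprod (l1 ++ l2) = lprod l1 ⋆ lprod l2.
Proof.
induction l1 as [|a l1 IH]; simpl.
- now rewrite gmul_1l.
- now rewrite IH, gmul_assoc.
Qed.

Lemma lprod_npow_double q l : exists E,
  lprod (map (fun a => npow a (2 * q)) l) = E ⋆ npow (lprod l) (2 * q)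
  /\ cl_le E ((length l - 1) * q).
Proof.
induction l as [|a [|b l] IH].
- exists gone; simpl; rewrite npow1, gmul_1l; split; [reflexivity|apply cl_le1].
- exists gone; simpl; rewrite !mulg1, gmul_1l; split; [reflexivity|apply cl_le1].
- destruct IH as [E [HE HEk]].
  destruct (npow_double_mul a (lprod (b :: l)) q) as [P [HP HPk]].
  exists (gconj E (ginv (npow a (2 * q))) ⋆ P); split.
  + change (npow a (2 * q) ⋆ lprod (map (fun a => npow a (2 * q)) (b :: l))
      = gconj E (ginv (npow a (2 * q))) ⋆ P ⋆ npow (a ⋆ lprod (b :: l)) (2 * q)).
    rewrite HE, <- (gmul_assoc G _ P), <- HP; gsimpl; reflexivity.
  + replace ((length (a :: b :: l) - 1) * q)%nat
      with ((length (b :: l) - 1) * q + q)%nat by (simpl; lia).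
    apply cl_leM; [apply cl_le_conj|]; assumption.
Qed.

(* [x, y] = x^-1 x^y, so up to q commutators its 2q-th power is x^{-2q} (x^{2q})^y = [x^{2q}, y]. *)
Lemma cl_le_comm_npow_double x y q : cl_le (npow (gcomm x y) (2 * q)) (q + 1).
Proof.
destruct (npow_double_mul (ginv x) (gconj x y) q) as [P [HP HPk]].
replace (gcomm x y) with (ginv x ⋆ gconj x y) by (gsimpl; reflexivity).
rewrite npowV, npow_conj in HP.
replace (npow (ginv x ⋆ gconj x y) (2 * q)) with (ginv P ⋆ gcomm (npow x (2 * q)) y).
- apply cl_leM; [apply cl_leV, HPk | apply cl_le_comm].
- apply (f_equal (gmul (ginv P))) in HP; rewrite mulKg in HP.
  rewrite <- HP; gsimpl; reflexivity.
Qed.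

Lemma cl_le_prod_comms_npow_double q (l : list (G * G)) :
  cl_le (npow (prod_comms G l) (2 * q)) ((length l - 1) * q + length l * (q + 1)).
Proof.
set (cs := map (fun p => gcomm (fst p) (snd p)) l).
assert (Hcs : prod_comms G l = lprod cs)
  by (unfold cs; induction l; simpl; congruence).
destruct (lprod_npow_double q cs) as [E [HE HEk]].
unfold cs in HEk; rewrite length_map in HEk.
replace (npow (prod_comms G l) (2 * q))
  with (ginv E ⋆ lprod (map (fun a => npow a (2 * q)) cs))
  by now rewrite HE, mulKg, Hcs.
apply cl_leM; [apply cl_leV, HEk|].
unfold cs; clear; induction l as [|p l IH]; simpl; [apply cl_le1|].
apply cl_leM; [apply cl_le_comm_npow_double | exact IH].
Qed.

Lemma cl_le_lprod_npow_double_trivial q l :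
  lprod l = gone -> cl_le (lprod (map (fun a => npow a (2 * q)) l)) ((length l - 2) * q).
Proof.
destruct l as [|a l] using rev_ind; intro Hl; [apply cl_le1|].
rewrite lprod_app in Hl; simpl in Hl; rewrite mulg1 in Hl.
assert (Ha : lprod l = ginv a).
{ apply (f_equal (fun t => t ⋆ ginv a)) in Hl.
  now rewrite gmul_1l, <- gmul_assoc, mulgV, mulg1 in Hl. }
destruct (lprod_npow_double q l) as [E [HE HEk]].
rewrite map_app, lprod_app, HE, Ha, npowV; simpl.
rewrite mulg1, <- gmul_assoc, gmul_Vl, mulg1.
rewrite length_app; simpl.
apply (cl_le_mono _ ((length l - 1) * q)); [nia | exact HEk].
Qed.

(* When k = 0 the product is trivial, which saves the term q of the general case. *)
Lemma cl_le_lprod_npow_double q l k :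
  is_prod_comm (lprod l) k ->
  cl_le (lprod (map (fun a => npow a (2 * q)) l)) ((2 * k + length l - 2) * q + k).
Proof.
intros [cs [Hk Hcs]].
destruct k as [|k].
- destruct cs; [|discriminate].
  apply (cl_le_mono _ ((length l - 2) * q)); [nia|].
  now apply cl_le_lprod_npow_double_trivial.
- destruct l as [|a l]; [apply cl_le1|].
  destruct (lprod_npow_double q (a :: l)) as [E [HE HEk]].
  pose proof (cl_le_prod_comms_npow_double q cs) as Hpow.
  rewrite Hcs, Hk in Hpow; rewrite HE.
  apply (cl_le_mono _ ((length (a :: l) - 1) * q + (S k - 1) * q + S k * (q + 1)));
    [simpl; nia|].
  rewrite <- Nat.add_assoc; apply cl_leM; assumption.
Qed.

(* Each conjugate x^y equals x [x, y], and the commutators are moved to the right. *)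
Lemma lprod_conj_zpow {I : Type} g (f : I -> G) (e : I -> Z) (is : list I) :
  (forall i, In i is -> exists y, f i = gconj (zpow g (e i)) y) ->
  exists F, lprod (map f is) = zpow g (fold_right Z.add 0%Z (map e is)) ⋆ F
            /\ cl_le F (length is).
Proof.
induction is as [|i is IH]; intros Hf.
- exists gone; simpl; rewrite gmul_1l; split; [reflexivity|apply cl_le1].
- destruct (Hf i (or_introl eq_refl)) as [y Hy].
  destruct IH as [F [HF HFk]]; [intros j Hj; apply Hf; now right|].
  set (z := fold_right Z.add 0%Z (map e is)).
  exists (gconj (gcomm (zpow g (e i)) y) (zpow g z) ⋆ F); split.
  + simpl; fold z; rewrite HF, Hy, zpowD; gsimpl; reflexivity.
  + change (length (i :: is)) with (1 + length is)%nat.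
    apply cl_leM; [apply cl_le_conj, cl_le_comm | exact HFk].
Qed.

Lemma gprod_lprod (f : nat -> G) m : gprod f m = lprod (map f (seq 0 m)).
Proof. unfold gprod, lprod; induction (seq 0 m); simpl; congruence. Qed.

Lemma cl_le_zpow_double_zsum g m (gs : nat -> G) (n : nat -> Z) k q :
  (forall i, (i < m)%nat -> exists x, gs i = gconj g x) ->
  is_prod_comm (gprod (fun i => zpow (gs i) (n i)) m) k ->
  cl_le (zpow g (Z.of_nat (2 * q) * zsum n m)) ((2 * k + m - 2) * q + k + m).
Proof.
intros Hconj Hk; rewrite gprod_lprod in Hk.
pose proof (cl_le_lprod_npow_double q _ k Hk) as Hpow.
rewrite map_map, length_map, length_seq in Hpow.
destruct (lprod_conj_zpow g (fun i => npow (zpow (gs i) (n i)) (2 * q))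
            (fun i => Z.of_nat (2 * q) * n i)%Z (seq 0 m)) as [F [HF HFk]].
{ intros i Hi; apply in_seq in Hi.
  destruct (Hconj i ltac:(lia)) as [x ->].
  exists x; now rewrite npow_zpow, zpow_conj. }
rewrite length_seq in HFk.
assert (Hsum : forall is : list nat,
  (fold_right Z.add 0 (map (fun i => Z.of_nat (2 * q) * n i) is)
   = Z.of_nat (2 * q) * fold_right Z.add 0 (map n is))%Z)
  by (induction is as [|i is IH]; cbn [fold_right map]; [|rewrite IH]; ring).
rewrite Hsum in HF; unfold zsum.
apply (f_equal (fun t => t ⋆ ginv F)) in HF.
rewrite <- gmul_assoc, mulgV, mulg1 in HF; rewrite <- HF.
apply cl_leM; [exact Hpow | apply cl_leV, HFk].
Qed.

End GroupTheory.

(** * Passing to the limit *)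

Open Scope R_scope.

Lemma Un_cv_subseq (u : nat -> R) (phi : nat -> nat) (l : R) :
  (forall q, (q <= phi q)%nat) -> Un_cv u l -> Un_cv (fun q => u (phi q)) l.
Proof.
intros Hphi Hu eps Heps; destruct (Hu eps Heps) as [N HN].
exists N; intros q Hq; apply HN; specialize (Hphi q); lia.
Qed.

(* The subsequence of c n / (n + 1) along n + 1 = d (q + 1) is dominated by
   K / d + (C / d) / (q + 1). *)
Lemma Un_cv_le_of_linear_bound (c : nat -> nat) (s : R) (d K C : nat) :
  (1 <= d)%nat -> Un_cv (fun n => INR (c n) / INR (S n)) s ->
  (forall q, (c (d * S q - 1) <= K * S q + C)%nat) -> s * INR d <= INR K.
Proof.
intros Hd Hcv Hbound.
assert (Hd' : 1 <= INR d) by (apply (le_INR 1); exact Hd).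
assert (Hconst : Un_cv (fun _ => INR K / INR d) (INR K / INR d))
  by (intros e He; exists 0%nat; intros; rewrite R_dist_eq; lra).
assert (Hlim : s <= INR K / INR d + INR C / INR d * 0).
{ apply Rle_cv_lim with
    (Un := fun q => INR (c (d * S q - 1)%nat) / INR (S (d * S q - 1)))
    (Vn := fun q => INR K / INR d + INR C / INR d * RinvN q).
  - intro q; simpl (pos (RinvN q)).
    replace (S (d * S q - 1)) with (d * S q)%nat by nia.
    assert (Hq : 0 < INR q + 1) by (pose proof (pos_INR q); lra).
    rewrite mult_INR, S_INR.
    apply Rle_trans with (INR (K * S q + C) / (INR d * (INR q + 1))).
    + apply Rmult_le_compat_r; [apply Rlt_le, Rinv_0_lt_compat; nra|].
      apply le_INR, Hbound.
    + rewrite plus_INR, mult_INR, S_INR; right; field; lra.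
  - apply (Un_cv_subseq (fun n => INR (c n) / INR (S n))); [intro q; nia | exact Hcv].
  - apply CV_plus; [exact Hconst | apply CV_mult; [|apply RinvN_cv]].
    intros e He; exists 0%nat; intros; rewrite R_dist_eq; lra. }
rewrite Rmult_0_r, Rplus_0_r in Hlim.
apply (Rmult_le_compat_r (INR d)) in Hlim; [|lra].
replace (INR K / INR d * INR d) with (INR K) in Hlim by (field; lra).
exact Hlim.
Qed.

Theorem corollary2p2 (G : Group) (g : G) (s : R)
  (hg : in_commutator_subgroup g) (hs : scl_is g s)
  (m : nat) (gs : nat -> G) (n : nat -> Z)
  (hm : (1 <= m)%nat)
  (hconj : forall i, (i < m)%nat -> exists x : G, gs i = gconj g x)
  (hnot : ~ (m = 1%nat /\ zpow (gs 0%nat) (n 0%nat) = gone))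
  (k : nat) (hk : cl_is (gprod (fun i => zpow (gs i) (n i)) m) k) :
  INR k >= s * Rabs (IZR (zsum n m)) - INR m / 2 + 1.
Proof.
destruct hs as [c [hc hcv]].
assert (Hkm : (2 <= 2 * k + m)%nat).
{ destruct k; [|lia]; destruct (Nat.eq_dec m 1) as [->|]; [exfalso|lia].
  apply hnot; split; [reflexivity|].
  destruct hk as [[[|] [Hl Hp]] _]; [|discriminate].
  unfold gprod in Hp; simpl in Hp; now rewrite mulg1 in Hp. }
set (A := Z.abs_nat (zsum n m)).
assert (HA : Rabs (IZR (zsum n m)) = INR A)
  by (unfold A; now rewrite INR_IZR_INZ, Nat2Z.inj_abs_nat, abs_IZR).
assert (Hs : s * INR (2 * A) <= INR (2 * k + m - 2)).
{ destruct (Nat.eq_dec A 0) as [HA0|HA0].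
  - rewrite HA0, Nat.mul_0_r; simpl; rewrite Rmult_0_r; apply pos_INR.
  - apply (Un_cv_le_of_linear_bound c s (2 * A) (2 * k + m - 2) (k + m)); [lia|exact hcv|].
    intro q; apply (cl_le_is G _ _ _ (hc _)).
    pose proof (cl_le_zpow_double_zsum G g m gs n k (S q) hconj (proj1 hk)) as Hq.
    apply cl_le_npow_abs in Hq.
    replace (Z.abs_nat (Z.of_nat (2 * S q) * zsum n m)) with (S (2 * A * S q - 1)) in Hq
      by (unfold A; rewrite Zabs2Nat.inj_mul, Zabs2Nat.id; nia).
    eapply cl_le_mono; [|exact Hq]; nia. }
rewrite HA; rewrite minus_INR, plus_INR, !mult_INR in Hs by lia.
simpl (INR 2) in Hs; lra.
Qed.
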